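(* Let $A$ and $I$ be finite sets. In the group $\langle\mathcal P^\times(I)\rangle^{\otimes A}$ one has $$\bigotimes_{a\in A}\sum_{J\in\mathcal P^\times(I)}(-1)^{|I|-1-|J|}\langle J\rangle-\sum_{J\in\mathcal P^\times(I)}(-1)^{|I|-1-|J|}\bigotimes_{a\in A}\langle J\rangle=\sum_{k\in\mathcal R'(A,I)}\ \bigotimes_{a\in A}\ \sum_{J\in\mathcal P(k(a))}(-1)^{|k(a)|-|J|}\langle J\rangle.$$
   Context: $\mathcal P(I)$ is the set of subsets of $I$ and $\mathcal P^\times(I)=\mathcal P(I)\setminus\{I\}$; $\langle\mathcal P^\times(I)\rangle$ is the free abelian group with basis $\{\langle J\rangle: J\in\mathcal P^\times(I)\}$, and $\langle\mathcal P^\times(I)\rangle^{\otimes A}$ is the tensor product over $\mathbb Z$ of copies indexed by $A$. $\mathcal R'(A,I)$ is the set of functions $k\colon A\to\mathcal P^\times(I)$ with $\bigcup_{a\in A}k(a)=I$. *)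

From HB Require Import structures.
From mathcomp Require Import all_boot all_order all_algebra.
Set Implicit Arguments. Unset Strict Implicit. Unset Printing Implicit Defensive.
Import GRing.Theory.
Local Open Scope ring_scope.

(* Model of the free abelian group <P(I)> : finitely supported Z-valued
   functions on subsets of I.  <P^x(I)> is the subgroup supported on proper
   subsets; every element used below lies in it. *)
Definition FreeP (I : finType) := {ffun {set I} -> int}.

Definition gen (I : finType) (J : {set I}) : FreeP I := [ffun K => (K == J)%:Z].

(* Model of the tensor power <P(I)>^{(x)A}: the free abelian group on
   A-indexed families of subsets, i.e. functions {ffun A -> {set I}} -> int;
   the basis element indexed by k is (x)_a <k a>. *)
Definition TensP (A I : finType) := {ffun {ffun A -> {set I}} -> int}.

Definition tens (A I : finType) (x : A -> FreeP I) : TensP A I :=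
  [ffun k : {ffun A -> {set I}} => \prod_(a : A) x a (k a)].

Definition Rprime (A I : finType) (k : {ffun A -> {set I}}) : bool :=
  [forall a, k a != setT] && (\bigcup_(a : A) k a == setT).

From mathcomp Require Import all_boot all_order all_algebra.
From mathcomp Require Import zify.
Set Implicit Arguments.
Unset Strict Implicit.
Unset Printing Implicit Defensive.

Import GRing.Theory.
Local Open Scope ring_scope.

(* Let m(U) = sum_{J <= U} (-1)^{|U|-|J|} <J>.  Moebius inversion on the
   Boolean lattice gives <U> = sum_{K <= U} m(K) and
   sum_{J <> I} (-1)^{|I|-1-|J|} <J> = sum_{K <> I} m(K).  Expanding the tensor
   powers multilinearly, the first term on the left becomes the sum of
   (x)_a m(k a) over all k with proper values, and the second term the same
   sum over the k with proper union, because the alternating sum over the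
   proper J containing the union of k collapses to 1.  Their difference is
   the sum over the k with proper values and full union, i.e. over R'(A,I). *)

Lemma sign_subn_pred (n p : nat) : (n < p)%N ->
  (-1 : int) ^+ (p - 1 - n) = - (-1) ^+ (p - n).
Proof.
move=> lt_np; have -> : (p - n = (p - 1 - n).+1)%N by lia.
by rewrite exprS mulN1r opprK.
Qed.

Lemma sign_subn_split (m n p : nat) : (m <= n <= p)%N ->
  (-1 : int) ^+ (p - n) = (-1) ^+ (p - m) * (-1) ^+ (n - m).
Proof.
move=> /andP[le_mn le_np].
have -> : (p - m = (p - n) + (n - m))%N by lia.
by rewrite exprD -mulrA -expr2 sqrr_sign mulr1.
Qed.

Section AlternatingSums.
Variable I : finType.
Implicit Types K U W X : {set I}.

Lemma sum_interval_sign X U : X \subset U ->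
  \sum_(K : {set I} | (X \subset K) && (K \subset U)) (-1 : int) ^+ (#|K| - #|X|)
  = (X == U)%:R.
Proof.
move=> XU; have [<- | neXU] := eqVneq X U.
  by rewrite (big_pred1 X) ?subnn // => K /=; rewrite eqEsubset andbC.
have /properP[_ [i Ui notXi]] : X \proper U by rewrite properEneq neXU.
pose flip (K : {set I}) := if i \in K then K :\ i else i |: K.
have flipK : involutive flip.
  move=> K; rewrite /flip; case: (boolP (i \in K)) => iK.
    by rewrite setD11 setD1K.
  by rewrite setU11 setU1K.
have in_interval_flip K :
    (X \subset flip K) && (flip K \subset U) = (X \subset K) && (K \subset U).
  rewrite /flip; case: ifP => iK.
    by rewrite subsetD1 notXi andbT subDset (setUidPr _) // sub1set.
  rewrite -subDset (setDidPl _) ?subUset ?sub1set ?Ui //.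
  by rewrite disjoint_sym disjoints1.
have sign_flip K : X \subset K ->
    (-1 : int) ^+ (#|flip K| - #|X|) = - (-1) ^+ (#|K| - #|X|).
  move=> XK; have leXK := subset_leq_card XK.
  rewrite /flip; case: (boolP (i \in K)) => iK; last first.
    by rewrite cardsU1 iK -[RHS]mulN1r -exprS; congr (_ ^+ _); lia.
  have /subset_leq_card : X \subset K :\ i by rewrite subsetD1 XK.
  have := cardsD1 i K; rewrite iK /= => cardK leXKi.
  have -> : (#|K| - #|X| = (#|K :\ i| - #|X|).+1)%N by lia.
  by rewrite exprS mulN1r opprK.
set s := LHS; have : s = - s.
  rewrite {1}/s (reindex_inj (inv_inj flipK)) /= -sumrN.
  under eq_bigl do rewrite in_interval_flip.
  by apply: eq_bigr => K /andP[XK _]; apply: sign_flip.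
by move=> ?; lia.
Qed.

Lemma sum_proper_superset_sign X :
  \sum_(K : {set I} | (K != setT) && (X \subset K)) (-1 : int) ^+ (#|K| - #|X|)
  = (X == setT)%:R - (-1) ^+ (#|I| - #|X|).
Proof.
rewrite -(sum_interval_sign (subsetT X)) [in RHS](bigD1 setT) ?subsetT //=.
rewrite cardsT addrC addrK.
by apply: eq_bigl => K; rewrite subsetT andbT andbC.
Qed.

Lemma sum_proper_superset_cosign W :
  \sum_(U : {set I} | (U != setT) && (W \subset U)) (-1 : int) ^+ (#|I| - 1 - #|U|)
  = (W != setT)%:R.
Proof.
pose e := (-1 : int) ^+ (#|I| - #|W|).
have signE U : (U != setT) && (W \subset U) ->
    (-1 : int) ^+ (#|I| - 1 - #|U|) = - e * (-1) ^+ (#|U| - #|W|).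
  move=> /andP[UT WU]; have leWU := subset_leq_card WU.
  have ltUI : (#|U| < #|I|)%N by rewrite -cardsT proper_card // properT.
  by rewrite sign_subn_pred // (@sign_subn_split #|W|) ?leWU 1?ltnW // mulNr.
rewrite (eq_bigr _ signE) -mulr_sumr sum_proper_superset_sign.
have [-> | WT] := eqVneq W setT; first by rewrite /e cardsT subnn subrr mulr0.
by rewrite sub0r mulrNN -expr2 sqrr_sign.
Qed.

End AlternatingSums.

Section MobiusBasis.
Variable I : finType.
Implicit Types U X : {set I}.

Definition mobius_gen U : FreeP I :=
  \sum_(J : {set I} | J \subset U) gen J *~ (-1) ^+ (#|U| - #|J|).

Lemma sum_genE (P : pred {set I}) (c : {set I} -> int) X :
  (\sum_(J | P J) gen J *~ c J) X = if P X then c X else 0.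
Proof.
rewrite sum_ffunE big_mkcond (bigD1 X) //= big1 ?addr0 => [|J neJX].
  by rewrite ffunMzE ffunE eqxx mulrzz mul1r; case: (P X).
by rewrite ffunMzE ffunE eq_sym (negbTE neJX) mulrzz mul0r; case: (P J).
Qed.

Lemma mobius_genE U X :
  mobius_gen U X = if X \subset U then (-1) ^+ (#|U| - #|X|) else 0.
Proof. exact: sum_genE. Qed.

Lemma gen_sum_mobius U : gen U = \sum_(K : {set I} | K \subset U) mobius_gen K.
Proof.
apply/ffunP => X; rewrite sum_ffunE ffunE.
under eq_bigr do rewrite mobius_genE.
rewrite -big_mkcondr.
have [XU | notXU] := boolP (X \subset U).
  by rewrite (eq_bigl _ _ (fun K => andbC _ _)) sum_interval_sign // natz.
rewrite big_pred0 => [|K]; first by case: eqP notXU => // ->; rewrite subxx.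
by apply: contraNF notXU => /andP[KU XK]; apply: subset_trans XK KU.
Qed.

Lemma proper_alt_sum_mobius :
  \sum_(J : {set I} | J != setT) gen J *~ (-1) ^+ (#|I| - 1 - #|J|)
  = \sum_(K : {set I} | K != setT) mobius_gen K.
Proof.
apply/ffunP => X; rewrite sum_genE sum_ffunE.
under eq_bigr do rewrite mobius_genE.
rewrite -big_mkcondr sum_proper_superset_sign.
have [-> | XT] := eqVneq X setT; first by rewrite cardsT subnn subrr.
by rewrite sub0r sign_subn_pred // -cardsT proper_card // properT.
Qed.

End MobiusBasis.

Section Tensors.
Variables A I : finType.

Lemma tens_sum (T : finType) (P : pred T) (F : A -> T -> FreeP I) :
  tens (fun a => \sum_(t | P t) F a t)
  = \sum_(k : {ffun A -> T} | [forall a, P (k a)]) tens (fun a => F a (k a)).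
Proof.
apply/ffunP => f; rewrite !ffunE sum_ffunE.
under eq_bigr do rewrite sum_ffunE.
rewrite bigA_distr_big; apply: eq_big => [k | k _]; last by rewrite ffunE.
exact/ffun_onP/forallP.
Qed.

Lemma tens_const_gen (J : {set I}) :
  tens (fun _ : A => gen J)
  = \sum_(k : {ffun A -> {set I}} | \bigcup_a k a \subset J)
      tens (fun a => mobius_gen (k a)).
Proof.
rewrite (gen_sum_mobius J) tens_sum; apply: eq_bigl => k.
by apply/forallP/bigcupsP => kJ a //; apply: kJ.
Qed.

Lemma sum_tens_const_gen_sign :
  \sum_(J : {set I} | J != setT)
    tens (fun _ : A => gen J) *~ (-1) ^+ (#|I| - 1 - #|J|)
  = \sum_(k : {ffun A -> {set I}} | \bigcup_a k a != setT)
      tens (fun a => mobius_gen (k a)).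
Proof.
under eq_bigr do rewrite tens_const_gen mulrz_suml.
rewrite (exchange_big_dep xpredT) //= [RHS]big_mkcond; apply: eq_bigr => k _.
by rewrite -mulrz_sumr sum_proper_superset_cosign mulrz_nat mulrb.
Qed.

Lemma sum_forall_proper_split (V : zmodType) (F : {ffun A -> {set I}} -> V) :
  \sum_(k : {ffun A -> {set I}} | [forall a, k a != setT]) F k
  = \sum_(k | Rprime k) F k
    + \sum_(k : {ffun A -> {set I}} | \bigcup_a k a != setT) F k.
Proof.
rewrite (bigID (fun k : {ffun A -> {set I}} => \bigcup_a k a == setT)) /=.
congr (_ + _).
apply: eq_bigl => k; rewrite andb_idl // => notcover.
apply/forallP => a; apply: contra notcover => /eqP kaT.
by rewrite eqEsubset subsetT -kaT (bigcup_sup a).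
Qed.

End Tensors.

Theorem lemma15p2 (A I : finType) :
  tens (fun _ : A => \sum_(J : {set I} | J != setT)
                       gen J *~ ((-1) ^+ (#|I| - 1 - #|J|)))
  - \sum_(J : {set I} | J != setT)
      tens (fun _ : A => gen J) *~ ((-1) ^+ (#|I| - 1 - #|J|))
  = \sum_(k : {ffun A -> {set I}} | Rprime k)
      tens (fun a => \sum_(J : {set I} | J \subset k a)
                       gen J *~ ((-1) ^+ (#|k a| - #|J|))).
Proof.
rewrite proper_alt_sum_mobius tens_sum sum_tens_const_gen_sign.
by rewrite sum_forall_proper_split addrK.
Qed.
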